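(* Under the regularity assumption below except for the gain function, suppose in addition that $\nabla^2h$ is constant on $\mathbb{R}^d$ ($h$ is a strictly convex quadratic) and $\mu_{f/h}>0$. Then the regularity assumption holds with gain function $G\equiv1$, and Bregman-SAGA with constant step size $\eta_t=1/(8L_{f/h})$ satisfies, for all $t\ge0$, $$\mathbb{E}[\psi_t]\le\Big(1-\min\big(\tfrac{1}{8\kappa_{f/h}},\tfrac{1}{2n}\big)\Big)^t\psi_0,$$ where $\kappa_{f/h}=L_{f/h}/\mu_{f/h}$.
   Context: For differentiable $\varphi$, $D_\varphi(x,y)=\varphi(x)-\varphi(y)-\nabla\varphi(y)^\top(x-y)$; $h^*$ is the convex conjugate of $h$. $f$ is $L$-relatively smooth and $\mu$-relatively strongly convex w.r.t. $h$ if $\mu D_h(x,y)\le D_f(x,y)\le LD_h(x,y)$ for all $x,y$. Regularity assumption: $f=\frac1n\sum_{i=1}^nf_i$ with each $f_i$ convex and $L_{f/h}$-relatively smooth w.r.t. $h$, $f$ is $\mu_{f/h}$-relatively strongly convex w.r.t. $h$, and $G$ is a gain function such that for all $x,y,v\in\mathbb{R}^d$ and $\lambda\in[-1,1]$: $D_{h^*}(x+\lambda v,x)\le G(x,y,v)\lambda^2D_{h^*}(y+v,y)$. The minimizer $x^\star$ of $f$ satisfies $\nabla f(x^\star)=0$. Bregman-SAGA: set $\phi_i^0=x_0$ for all $i$; at iteration $t$, pick $i_t$ uniformly in $\{1,\dots,n\}$, set $g_t=\nabla f_{i_t}(x_t)-\nabla f_{i_t}(\phi^t_{i_t})+\frac1n\sum_{j=1}^n\nabla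 f_j(\phi^t_j)$, $\nabla h(x_{t+1})=\nabla h(x_t)-\eta_tg_t$, $\phi^{t+1}_{i_t}=x_t$, $\phi^{t+1}_j=\phi^t_j$ for $j\ne i_t$. $H_t=\frac1n\sum_{i=1}^nD_{f_i}(\phi_i^t,x^\star)$ and $\psi_t=\frac{1}{\eta_t}D_h(x^\star,x_t)+\frac n2H_t$. *)

From HB Require Import structures.
From mathcomp Require Import all_boot all_order all_algebra.
From mathcomp Require Import all_classical all_reals all_analysis.
Set Implicit Arguments. Unset Strict Implicit. Unset Printing Implicit Defensive.
Import Order.TTheory GRing.Theory Num.Theory.
Import numFieldNormedType.Exports.
Local Open Scope classical_set_scope.
Local Open Scope ring_scope.

Section Defs.
Variables (R : realType) (d : nat).
Local Notation V := 'rV[R]_d.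

Definition dot (x y : V) : R := \sum_(j < d) x 0 j * y 0 j.

Definition grad (phi : V -> R) (x : V) : V :=
  \row_(j < d) ('d phi x (delta_mx 0 j : V)).

Definition bregman (phi : V -> R) (x y : V) : R :=
  phi x - phi y - dot (grad phi y) (x - y).

Definition conj_fun (h : V -> R) (y : V) : R :=
  sup (range (fun x : V => dot y x - h x)).

Definition convex_fun (f : V -> R) : Prop :=
  forall (x y : V) (t : R), 0 <= t <= 1 ->
    f ((1 - t) *: x + t *: y) <= (1 - t) * f x + t * f y.

Definition differentiable_everywhere (f : V -> R) : Prop :=
  forall x : V, differentiable f x.

Definition rel_smooth (L : R) (f h : V -> R) : Prop :=
  forall x y : V, bregman f x y <= L * bregman h x y.

Definition rel_strongly_convex (mu : R) (f h : V -> R) : Prop :=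
  forall x y : V, mu * bregman h x y <= bregman f x y.

Definition gain_condition (h : V -> R) (G : V -> V -> V -> R) : Prop :=
  forall (x y v : V) (lam : R), -1 <= lam <= 1 ->
    bregman (conj_fun h) (x + lam *: v) x
      <= G x y v * lam ^+ 2 * bregman (conj_fun h) (y + v) y.

Definition quad (A : 'M[R]_d) (b : V) (c : R) (x : V) : R :=
  2^-1 * (x *m A *m x^T) 0 0 + dot b x + c.

(* ---------- Bregman-SAGA ----------
   A history is a list of sampled indices, MOST RECENT FIRST:
   [:: i_{t-1}; ...; i_0]; the empty history corresponds to t = 0.
   X : seq 'I_n -> V gives the iterate x_t after that history. *)
Section SAGA.
Variables (n : nat) (x0 : V) (X : seq 'I_n -> V).

Fixpoint saga_phi (s : seq 'I_n) (j : 'I_n) : V :=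
  match s with
  | [::] => x0
  | i :: s' => if j == i then X s' else saga_phi s' j
  end.

Variable F : 'I_n -> V -> R.

(* g_t when i_t = i and the history before step t is s. *)
Definition saga_g (s : seq 'I_n) (i : 'I_n) : V :=
  grad (F i) (X s) - grad (F i) (saga_phi s i)
  + n%:R^-1 *: \sum_(j < n) grad (F j) (saga_phi s j).

Definition is_saga_iterates (h : V -> R) (eta : R) : Prop :=
  X [::] = x0 /\
  forall (s : seq 'I_n) (i : 'I_n),
    grad h (X (i :: s)) = grad h (X s) - eta *: saga_g s i.

Definition saga_H (xstar : V) (s : seq 'I_n) : R :=
  n%:R^-1 * \sum_(i < n) bregman (F i) (saga_phi s i) xstar.

Definition saga_psi (h : V -> R) (eta : R) (xstar : V) (s : seq 'I_n) : R :=
  eta^-1 * bregman h xstar (X s) + n%:R / 2 * saga_H xstar s.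

Definition expect_t (t : nat) (Y : seq 'I_n -> R) : R :=
  (n%:R ^+ t)^-1 * \sum_(s : t.-tuple 'I_n) Y (tval s).

End SAGA.
End Defs.

(* With h(x) = x A x^T / 2 + b x + c, the Bregman divergence of h is the
   quadratic form of A, and completing the square shows that h^* is again a
   quadratic, with matrix A^-1; its Bregman divergence scales by lambda^2 when
   the increment does, which is the gain condition with G = 1.
   For the rate, write z = xstar. The mirror step x' = x - eta g A^-1 expands
   exactly: D_h(z, x') = D_h(z, x) + eta <g, z - x> + eta^2/2 |g|^2_{A^-1}.
   The mean of g is grad f(x), whose pairing with z - x equals
   -(D_f(x, z) + D_f(z, x)), and its second moment is at most
   4 L (D_f(x, z) + H), by cocoercivity
   |grad f_i u - grad f_i v|^2_{A^-1} <= 2 L D_{f_i}(u, v) and a variance bound.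
   With the exact expected update of H and D_f(z, x) >= mu D_h(z, x), the
   conditional expectation of psi_{t+1} is at most (1 - m) psi_t for
   m = min(1/(8 kappa), 1/(2n)); iterating gives the claim. *)

From HB Require Import structures.
From mathcomp Require Import all_boot all_order all_algebra.
From mathcomp Require Import all_classical all_reals all_analysis.
From mathcomp Require Import ring lra.
Import Order.TTheory GRing.Theory Num.Theory.
Import numFieldNormedType.Exports.
Local Open Scope ring_scope.
Set Implicit Arguments. Unset Strict Implicit. Unset Printing Implicit Defensive.

Section InnerProduct.
Variables (R : realType) (d : nat).
Local Notation V := 'rV[R]_d.

Definition bil (M : 'M[R]_d) (x y : V) : R := (x *m M *m y^T) 0 0.

Lemma dotC (u v : V) : dot u v = dot v u.
Proof. by apply: eq_bigr => j _; rewrite mulrC. Qed.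

Lemma dotDl (u w v : V) : dot (u + w) v = dot u v + dot w v.
Proof. by rewrite /dot -big_split; apply: eq_bigr => j _; rewrite mxE mulrDl. Qed.

Lemma dotZl (a : R) (u v : V) : dot (a *: u) v = a * dot u v.
Proof. by rewrite /dot mulr_sumr; apply: eq_bigr => j _; rewrite mxE mulrA. Qed.

Lemma dotNl (u v : V) : dot (- u) v = - dot u v.
Proof. by rewrite -scaleN1r dotZl mulN1r. Qed.

Lemma dotBl (u w v : V) : dot (u - w) v = dot u v - dot w v.
Proof. by rewrite dotDl dotNl. Qed.

Lemma dotZr (a : R) (u v : V) : dot v (a *: u) = a * dot v u.
Proof. by rewrite !(dotC v) dotZl. Qed.

Lemma dotBr (u w v : V) : dot v (u - w) = dot v u - dot v w.
Proof. by rewrite !(dotC v) dotBl. Qed.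

Lemma dot0l (v : V) : dot 0 v = 0.
Proof. by rewrite /dot big1 // => j _; rewrite mxE mul0r. Qed.

Lemma dot_suml (I : finType) (u : I -> V) (v : V) :
  dot (\sum_i u i) v = \sum_i dot (u i) v.
Proof.
by rewrite /dot exchange_big /=; apply: eq_bigr => j _; rewrite summxE mulr_suml.
Qed.

Lemma dot_delta (u : V) j : dot u (delta_mx 0 j) = u 0 j.
Proof.
rewrite /dot (bigD1 j) //= big1 ?addr0; first by rewrite mxE !eqxx mulr1.
by move=> k /negPf kj; rewrite mxE kj andbF mulr0.
Qed.

Lemma dot_inj (u w : V) : (forall v, dot u v = dot w v) -> u = w.
Proof. by move=> uw; apply/rowP => j; rewrite -!dot_delta uw. Qed.

Lemma dot_grad (f : V -> R) x v : dot (grad f x) v = 'd f x v.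
Proof.
have {2}-> : v = \sum_(j < d) v 0 j *: (delta_mx 0 j : V).
  apply/rowP => k; rewrite summxE (bigD1 k) //= big1 ?addr0.
    by rewrite !mxE !eqxx mulr1.
  by move=> j /negPf jk; rewrite !mxE eq_sym jk andbF mulr0.
rewrite linear_sum /dot; apply: eq_bigr => j _.
by rewrite linearZ /= !mxE mulrC.
Qed.

Lemma dot_mulmx (M : 'M[R]_d) (x v : V) : dot (x *m M) v = bil M x v.
Proof. by rewrite /bil [RHS]mxE; apply: eq_bigr => j _; rewrite [v^T _ _]mxE. Qed.

Lemma bil1 (x y : V) : bil 1%:M x y = dot x y.
Proof. by rewrite -dot_mulmx mulmx1. Qed.

Lemma bil_mulmxl (M N : 'M[R]_d) (x y : V) : bil M (x *m N) y = bil (N *m M) x y.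
Proof. by rewrite /bil mulmxA. Qed.

Lemma bilC (M : 'M[R]_d) (x y : V) : M^T = M -> bil M x y = bil M y x.
Proof.
move=> symM; rewrite /bil -[in RHS]symM -[in RHS](trmxK y) -!trmx_mul mulmxA.
by rewrite [RHS]mxE.
Qed.

Variable M : 'M[R]_d.

Lemma bilDl (x y z : V) : bil M (x + y) z = bil M x z + bil M y z.
Proof. by rewrite /bil !mulmxDl mxE. Qed.
Lemma bilZl a (x z : V) : bil M (a *: x) z = a * bil M x z.
Proof. by rewrite /bil -!scalemxAl mxE. Qed.
Lemma bilBl (x y z : V) : bil M (x - y) z = bil M x z - bil M y z.
Proof. by rewrite bilDl -scaleN1r bilZl mulN1r. Qed.
Lemma bilDr (x y z : V) : bil M z (x + y) = bil M z x + bil M z y.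
Proof. by rewrite /bil linearD /= !mulmxDr mxE. Qed.
Lemma bilZr a (x z : V) : bil M z (a *: x) = a * bil M z x.
Proof. by rewrite /bil linearZ /= -!scalemxAr mxE. Qed.
Lemma bilBr (x y z : V) : bil M z (x - y) = bil M z x - bil M z y.
Proof. by rewrite bilDr -scaleN1r bilZr mulN1r. Qed.
Lemma bil_suml (I : finType) (u : I -> V) (z : V) :
  bil M (\sum_i u i) z = \sum_i bil M (u i) z.
Proof.
by rewrite -dot_mulmx mulmx_suml dot_suml; apply: eq_bigr => i _; rewrite dot_mulmx.
Qed.
Lemma bil0l (z : V) : bil M 0 z = 0.
Proof. by rewrite /bil !mul0mx mxE. Qed.

End InnerProduct.

Section Differential.
Variables (R : realType) (d : nat).
Local Notation V := 'rV[R]_d.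

Lemma is_diff_sum (I : finType) (g dg : I -> V -> R) (x : V) :
  (forall i, is_diff x (g i) (dg i)) -> is_diff x (\sum_i g i) (\sum_i dg i).
Proof.
move=> gi; apply: (big_ind2 (fun G dG => is_diff x G dG)) => //.
- by have -> : (0 : V -> R) = cst 0 by []; exact: is_diff_cst.
- by move=> ? ? ? ? ? ?; exact: is_diffD.
Qed.

Lemma is_diff_coord j (x : V) :
  is_diff x (fun y : V => y 0 j) (fun y : V => y 0 j).
Proof.
have coord_linear : linear (fun y : V => y 0 j) by move=> a u w; rewrite !mxE.
pose coord : {linear V -> R} :=
  HB.pack (fun y : V => y 0 j) (GRing.isLinear.Build _ _ _ _ _ coord_linear).
have coord_cont : continuous coord by exact: coord_continuous.
apply: DiffDef; [exact: (@linear_differentiable _ _ _ coord) | exact: (@diff_lin _ _ _ coord)].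
Qed.

Lemma is_diff_mulmx_coord (N : 'M[R]_d) k (x : V) :
  is_diff x (fun y : V => (y *m N) 0 k) (fun y : V => (y *m N) 0 k).
Proof.
have -> : (fun y : V => (y *m N) 0 k) = \sum_j N j k *: (fun y : V => y 0 j).
  by apply/funext => y; rewrite fct_sumE mxE; apply: eq_bigr => j _; rewrite mulrC.
by apply: is_diff_sum => j; exact: is_diffZ (is_diff_coord j x).
Qed.

Lemma is_diff_quad (A : 'M[R]_d) b c (x : V) : A^T = A ->
  is_diff x (quad A b c) (fun v => bil A x v + dot b v).
Proof.
move=> symA.
have -> : quad A b c = 2^-1 *: \sum_k ((fun y : V => (y *m A) 0 k) * (fun y : V => y 0 k))
                        + \sum_k b 0 k *: (fun y : V => y 0 k) + cst c.
  by apply/funext => y; rewrite /quad -/(bil A y y) -dot_mulmx /dot /= !fct_sumE.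
apply: is_diff_eq.
  apply: is_diffD; apply: is_diffD.
    apply: is_diffZ; apply: is_diff_sum => k.
    exact: is_diffM (is_diff_mulmx_coord A k x) (is_diff_coord k x).
  by apply: is_diff_sum => k; exact: is_diffZ (is_diff_coord k x).
apply/funext => v.
rewrite !fct_sumE /= -[LHS]/(2^-1 * \sum_k ((x *m A) 0 k * v 0 k + x 0 k * (v *m A) 0 k)
                + \sum_k b 0 k * v 0 k + 0).
rewrite addr0 big_split /= -/(dot (x *m A) v) -/(dot x (v *m A)) -/(dot b v).
rewrite (dotC x) !dot_mulmx (bilC v x symA); lra.
Qed.

Lemma grad_quad (A : 'M[R]_d) b c (x : V) : A^T = A ->
  grad (quad A b c) x = x *m A + b.
Proof.
move=> symA; apply: dot_inj => v.
by rewrite dot_grad (@diff_val _ _ _ _ _ _ _ (is_diff_quad b c x symA)) dotDl dot_mulmx.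
Qed.

Lemma bregman_quad (A : 'M[R]_d) b c (x y : V) : A^T = A ->
  bregman (quad A b c) x y = 2^-1 * bil A (x - y) (x - y).
Proof.
move=> symA; rewrite /bregman grad_quad // dotDl dot_mulmx /quad.
rewrite -/(bil A x x) -/(bil A y y) !bilBl !bilBr dotBr (bilC y x symA); lra.
Qed.

Lemma grad_scaled_sum (I : finType) (a : R) (F : I -> V -> R) (x : V) :
  (forall i, differentiable (F i) x) ->
  grad (fun y => a * \sum_i F i y) x = a *: \sum_i grad (F i) x.
Proof.
move=> dF; apply: dot_inj => v; rewrite dot_grad dotZl dot_suml.
have dsum : is_diff x (a *: \sum_i F i) (a *: \sum_i ('d (F i) x : V -> R)).
  by apply: is_diffZ; apply: is_diff_sum => i; exact: differentiableP.
have -> : (fun y => a * \sum_i F i y) = a *: \sum_i F i by rewrite fct_sumE.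
rewrite (@diff_val _ _ _ _ _ _ _ dsum) /= fct_sumE.
by congr (_ * _); apply: eq_bigr => i _; rewrite dot_grad.
Qed.

Lemma bregman_scaled_sum (I : finType) (a : R) (F : I -> V -> R) (x y : V) :
  (forall i, differentiable (F i) y) ->
  bregman (fun z => a * \sum_i F i z) x y = a * \sum_i bregman (F i) x y.
Proof.
move=> dF; rewrite /bregman grad_scaled_sum // dotZl dot_suml -!mulrBr -!sumrB.
by congr (_ * _); apply: eq_bigr.
Qed.

Lemma bregman_ge0 (F : V -> R) (x y : V) :
  convex_fun F -> differentiable F y -> 0 <= bregman F x y.
Proof.
move=> cvxF dF; rewrite /bregman dot_grad -deriveE // subr_ge0.
set v := x - y.
have /cvg_ex [l Fl] := @diff_derivable _ _ _ F y v dF.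
have -> : 'D_v F y = l by apply: cvg_lim.
apply: (cvgr_to_le (cvg_dnbhs_at_right Fl)).
near=> t.
have t_gt0 : 0 < t by near: t; exact: nbhs_right_gt.
have t_lt1 : t < 1 by near: t; exact: nbhs_right_lt.
rewrite /= /shift.
have -> : t *: v + y = (1 - t) *: y + t *: x.
  by rewrite /v scalerBr scalerBl scale1r -addrA [- _ + y]addrC [RHS]addrC.
have := cvxF y x t; rewrite (ltW t_gt0) (ltW t_lt1) => /(_ isT) cvx.
rewrite -[_ *: _]/(t^-1 * _) ler_pdivrMl //; lra.
Unshelve. all: by end_near.
Qed.

Lemma bregman_three_point (F : V -> R) (x y z : V) :
  bregman F z y = bregman F z x + bregman F x y + dot (grad F x - grad F y) (z - x).
Proof.
rewrite /bregman; move: (grad F x) (grad F y) => gx gy.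
rewrite dotBl !dotBr; ring.
Qed.

Lemma dot_grad_critical (F : V -> R) (x z : V) : grad F z = 0 ->
  dot (grad F x) (z - x) = - bregman F x z - bregman F z x.
Proof.
rewrite /bregman => ->; rewrite dot0l; move: (dot (grad F x) (z - x)) => a; lra.
Qed.

End Differential.

Section SemiDefinite.
Variables (R : realType) (d : nat) (M : 'M[R]_d).
Local Notation V := 'rV[R]_d.
Hypotheses (symM : M^T = M) (psdM : forall v : V, 0 <= bil M v v).

Lemma bil_subr_le (p q : V) : bil M (p - q) (p - q) <= 2 * bil M p p + 2 * bil M q q.
Proof.
have := psdM (p + q).
rewrite !bilBl !bilBr !bilDl !bilDr (bilC q p symM); lra.
Qed.

Lemma bil_variance_le n (u : 'I_n -> V) : (0 < n)%N ->
  \sum_i bil M (u i - n%:R^-1 *: \sum_j u j) (u i - n%:R^-1 *: \sum_j u j)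
    <= \sum_i bil M (u i) (u i).
Proof.
move=> n_gt0; set ubar := n%:R^-1 *: \sum_j u j.
have sum_u : \sum_j u j = n%:R *: ubar.
  by rewrite /ubar scalerA mulfV ?scale1r // pnatr_eq0 -lt0n.
have expand i : bil M (u i - ubar) (u i - ubar)
    = bil M (u i) (u i) - 2 * bil M (u i) ubar + bil M ubar ubar.
  by rewrite !bilBl !bilBr (bilC ubar (u i) symM); lra.
rewrite (eq_bigr _ (fun i _ => expand i)) !big_split /= sumrN -mulr_sumr.
rewrite -bil_suml sum_u bilZl sumr_const card_ord -[bil M ubar ubar *+ n]mulr_natl.
have := psdM ubar; have : (0 : R) <= n%:R by [].
move: (bil M ubar ubar) (n%:R : R) => q N q_ge0 N_ge0; nra.
Qed.

Lemma bil_sub_centered_le n (u v : 'I_n -> V) : (0 < n)%N ->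
  \sum_i bil M (u i - (v i - n%:R^-1 *: \sum_j v j)) (u i - (v i - n%:R^-1 *: \sum_j v j))
    <= 2 * \sum_i bil M (u i) (u i) + 2 * \sum_i bil M (v i) (v i).
Proof.
move=> n_gt0; have := bil_variance_le v n_gt0.
set vbar := n%:R^-1 *: \sum_j v j => var_le.
apply: le_trans (_ : \sum_i (2 * bil M (u i) (u i) + 2 * bil M (v i - vbar) (v i - vbar)) <= _).
  by apply: ler_sum => i _; exact: bil_subr_le.
by rewrite big_split /= -!mulr_sumr lerD2l ler_wpM2l.
Qed.

End SemiDefinite.

Section PositiveDefinite.
Variables (R : realType) (d : nat) (A : 'M[R]_d).
Local Notation V := 'rV[R]_d.
Local Notation M := (invmx A).
Hypotheses (symA : A^T = A) (pdA : forall v : V, v != 0 -> 0 < (v *m A *m v^T) 0 0).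

Lemma bil_pd_ge0 (v : V) : 0 <= bil A v v.
Proof.
have [->|v_neq0] := eqVneq v 0; first by rewrite bil0l.
exact/ltW/pdA.
Qed.

Lemma pd_unitmx : A \in unitmx.
Proof.
rewrite unitmxE unitfE; apply/negP => /det0P [v v_neq0 vA].
by have := pdA v_neq0; rewrite vA mul0mx mxE ltxx.
Qed.

Lemma invmx_sym : M^T = M.
Proof. by rewrite trmx_inv symA. Qed.

Lemma bil_invmxl (w z : V) : bil A (w *m M) z = dot w z.
Proof. by rewrite bil_mulmxl (mulVmx pd_unitmx) bil1. Qed.

Lemma bil_invmx2 (w : V) : bil A (w *m M) (w *m M) = bil M w w.
Proof. by rewrite bil_invmxl dotC dot_mulmx. Qed.

Lemma bil_invmx_ge0 (v : V) : 0 <= bil M v v.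
Proof. by rewrite -bil_invmx2 bil_pd_ge0. Qed.

(* The supremum defining h^*(y) is attained at x = (y - b) A^-1; completing
   the square shows the conjugate is the quadratic with matrix A^-1. *)
Lemma conj_fun_quad b c :
  conj_fun (quad A b c) = quad M (- (b *m M)) (2^-1 * bil M b b - c).
Proof.
apply/funext => y.
set w := y - b; set top := 2^-1 * bil M w w - c.
have gap x : top - (dot y x - quad A b c x)
             = 2^-1 * bil A (x - w *m M) (x - w *m M).
  rewrite /top /quad -/(bil A x x) !bilBl !bilBr bil_invmx2.
  rewrite (bilC x (w *m M) symA) bil_invmxl /w dotBl !bilBl !bilBr (bilC b y invmx_sym).
  lra.
have top_ub : ubound (range (fun x : V => dot y x - quad A b c x)) top.
  move=> _ [x _ <-]; rewrite -subr_ge0 gap.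
  by apply: mulr_ge0; [lra | exact: bil_pd_ge0].
have top_attained : range (fun x : V => dot y x - quad A b c x) top.
  exists (w *m M) => //; apply/eqP; rewrite eq_sym -subr_eq0 gap subrr.
  by rewrite bil0l mulr0.
have -> : conj_fun (quad A b c) y = top.
  apply/eqP; rewrite eq_le; apply/andP; split.
    by apply: ge_sup => //; exists top.
  by apply: ub_le_sup => //; exists top.
rewrite /top /w /quad -/(bil M y y) !bilBl !bilBr.
rewrite dotNl dot_mulmx (bilC b y invmx_sym); lra.
Qed.

Lemma gain_condition_quad b c : gain_condition (quad A b c) (fun _ _ _ => 1).
Proof.
move=> x y v lam _; rewrite conj_fun_quad !bregman_quad ?invmx_sym //.
rewrite addrAC subrr add0r addrAC subrr add0r bilZl bilZr.
by rewrite le_eqVlt; apply/orP; left; apply/eqP; ring.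
Qed.

(* Test the smoothness bound at z = x - L^-1 (grad F x - grad F y) A^-1,
   the minimiser of its right-hand side in the three-point identity. *)
Lemma bregman_cocoercive (F : V -> R) b c (L : R) (x y : V) :
  convex_fun F -> differentiable F y -> rel_smooth L F (quad A b c) -> 0 < L ->
  bil M (grad F x - grad F y) (grad F x - grad F y) <= 2 * L * bregman F x y.
Proof.
move=> cvxF dF smoothF L_gt0.
set w := grad F x - grad F y; set k := L^-1.
have Lk : L * k = 1 by rewrite mulfV // gt_eqF.
set z := x - k *: (w *m M).
have zx : z - x = (- k) *: (w *m M) by rewrite /z addrAC subrr add0r scaleNr.
have := bregman_ge0 z cvxF dF.
rewrite (bregman_three_point F x y z) -/w zx dotZr dotC dot_mulmx.
have := smoothF z x; rewrite bregman_quad // zx bilZl bilZr bil_invmx2.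
move: (bil M w w) (bregman F z x) (bregman F x y) => q Dzx Dxy.
have -> : L * (2^-1 * (- k * (- k * q))) = (L * k) * (k * q) / 2 by ring.
rewrite Lk mul1r => smooth_zx three_point.
have kq_le : k * q / 2 <= Dxy by lra.
have := ler_wpM2l (ltW L_gt0) kq_le.
rewrite !mulrA Lk mul1r; lra.
Qed.

Lemma bregman_quad_step b c (z x w : V) (e : R) :
  bregman (quad A b c) z (x - e *: (w *m M))
  = bregman (quad A b c) z x + e * dot w (z - x) + e ^+ 2 / 2 * bil M w w.
Proof.
rewrite !bregman_quad //.
have -> : z - (x - e *: (w *m M)) = (z - x) + e *: (w *m M).
  by rewrite opprB addrCA addrC.
move: (z - x) => u.
rewrite !bilDl !bilDr !bilZl !bilZr bil_invmxl (bilC _ (w *m M) symA) bil_invmxl.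
by rewrite bil_invmx2 expr2; field.
Qed.

End PositiveDefinite.

Section SagaStep.
Variables (R : realType) (d n : nat).
Local Notation V := 'rV[R]_d.
Variables (A : 'M[R]_d) (b : V) (c : R) (F : 'I_n -> V -> R) (L mu eta : R)
  (xstar x0 : V) (X : seq 'I_n -> V).
Local Notation h := (quad A b c).
Local Notation f := (fun x => n%:R^-1 * \sum_(i < n) F i x).
Local Notation M := (invmx A).
Local Notation Q v := (bil M v v).
Local Notation phi := (saga_phi x0 X).
Local Notation g := (saga_g x0 X F).
Local Notation H := (saga_H x0 X F xstar).
Hypotheses (n_gt0 : (0 < n)%N) (symA : A^T = A)
  (pdA : forall v : V, v != 0 -> 0 < (v *m A *m v^T) 0 0)
  (diffF : forall i, differentiable_everywhere (F i))
  (convF : forall i, convex_fun (F i))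
  (smoothF : forall i, rel_smooth L (F i) h) (L_gt0 : 0 < L)
  (grad_f_xstar : grad f xstar = 0) (saga : is_saga_iterates x0 X F h eta).

Let n_neq0 : n%:R != 0 :> R.
Proof. by rewrite pnatr_eq0 -lt0n. Qed.

Let diffF_at i (x : V) : differentiable (F i) x.
Proof. exact: diffF. Qed.

Lemma sum_grad_xstar : \sum_i grad (F i) xstar = 0.
Proof.
have := grad_f_xstar; rewrite grad_scaled_sum => [/eqP|i]; last exact: diffF_at.
by rewrite scaler_eq0 invr_eq0 (negPf n_neq0) => /eqP.
Qed.

Lemma bregman_f_ge0 (x y : V) : 0 <= bregman f x y.
Proof.
rewrite bregman_scaled_sum => [|i]; last exact: diffF_at.
rewrite mulr_ge0 ?invr_ge0 ?ler0n //.
by apply: sumr_ge0 => i _; exact: bregman_ge0 (convF i) (diffF_at i y).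
Qed.

Lemma saga_H_ge0 s : 0 <= H s.
Proof.
rewrite mulr_ge0 ?invr_ge0 ?ler0n //.
by apply: sumr_ge0 => i _; exact: bregman_ge0 (convF i) (diffF_at i xstar).
Qed.

Lemma saga_step (s : seq 'I_n) (i : 'I_n) :
  X (i :: s) = X s - eta *: (g s i *m M).
Proof.
have AM := mulmxV (pd_unitmx pdA).
have := saga.2 s i; rewrite !grad_quad // => /(congr1 (fun z => (z - b) *m M)).
rewrite addrK -(addrAC _ (- _)) addrK -mulmxA AM mulmx1 mulmxBl -mulmxA AM mulmx1.
by rewrite -scalemxAl.
Qed.

Lemma sum_saga_g s : \sum_i g s i = \sum_i grad (F i) (X s).
Proof.
rewrite /saga_g !big_split /= sumrN sumr_const card_ord -scaler_nat scalerA.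
by rewrite mulfV // scale1r subrK.
Qed.

Let dX s j := grad (F j) (X s) - grad (F j) xstar.
Let dphi s j := grad (F j) (phi s j) - grad (F j) xstar.

Lemma saga_g_split s i : g s i = dX s i - (dphi s i - n%:R^-1 *: \sum_j dphi s j).
Proof.
rewrite /dX /dphi sumrB [X in _ *: (_ - X)]sum_grad_xstar subr0 /saga_g.
move: (grad (F i) (X s)) (grad (F i) (phi s i)) (grad (F i) xstar) => a p z.
by apply/rowP => k; rewrite !mxE; ring.
Qed.

Lemma saga_g_second_moment s :
  n%:R^-1 * \sum_i Q (g s i) <= 4 * L * (bregman f (X s) xstar + H s).
Proof.
have moment : \sum_i Q (g s i) <= 4 * L *
    (\sum_i bregman (F i) (X s) xstar + \sum_i bregman (F i) (phi s i) xstar).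
  under eq_bigr do rewrite saga_g_split.
  have := bil_sub_centered_le (invmx_sym symA) (bil_invmx_ge0 pdA) (dX s) (dphi s) n_gt0.
  move=> /le_trans; apply.
  (* Arithmetic is done on fresh variables: handing terms built from [grad]
     to lra, ring or keyed rewriting makes unification unfold ['d]. *)
  have combine (qx qp sx sp : R) : qx <= 2 * L * sx -> qp <= 2 * L * sp ->
      2 * qx + 2 * qp <= 4 * L * (sx + sp) by move=> *; lra.
  apply: combine; rewrite mulr_sumr; apply: ler_sum => i _.
  - exact: bregman_cocoercive (convF i) (diffF_at i xstar) (smoothF i) L_gt0.
  - exact: bregman_cocoercive (convF i) (diffF_at i xstar) (smoothF i) L_gt0.
rewrite bregman_scaled_sum => [|i]; last exact: diffF_at.
rewrite /saga_H -mulrDr mulrCA.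
by apply: ler_wpM2l moment; rewrite invr_ge0 ler0n.
Qed.

Lemma expected_bregman_step s : 0 <= eta ->
  n%:R^-1 * \sum_i bregman h xstar (X (i :: s))
  <= bregman h xstar (X s) - eta * (bregman f (X s) xstar + bregman f xstar (X s))
     + 2 * L * eta ^+ 2 * (bregman f (X s) xstar + H s).
Proof.
move=> eta_ge0.
have avg_dot : n%:R^-1 * \sum_i dot (g s i) (xstar - X s)
               = - bregman f (X s) xstar - bregman f xstar (X s).
  rewrite -dot_suml -dotZl sum_saga_g -grad_scaled_sum => [|i]; last exact: diffF_at.
  exact: dot_grad_critical grad_f_xstar.
under eq_bigr do rewrite saga_step (bregman_quad_step symA pdA).
rewrite 2!big_split /= sumr_const card_ord -2!mulr_sumr 2!mulrDr.
rewrite -[bregman h _ _ *+ n]mulr_natl mulKf //.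
rewrite [n%:R^-1 * (eta * _)]mulrCA avg_dot [n%:R^-1 * (_ * _)]mulrCA.
have combine (D e a a' H q : R) : q <= 4 * L * (a + H) ->
    D + e * (- a - a') + e ^+ 2 / 2 * q <= D - e * (a + a') + 2 * L * e ^+ 2 * (a + H).
  move=> q_le; have e2_ge0 : 0 <= e ^+ 2 / 2 by rewrite mulr_ge0 ?sqr_ge0.
  by have := ler_wpM2l e2_ge0 q_le; lra.
exact: combine (saga_g_second_moment s).
Qed.

Lemma expected_H_step s :
  n%:R^-1 * \sum_i H (i :: s) = H s + n%:R^-1 * (bregman f (X s) xstar - H s).
Proof.
have update i : \sum_j bregman (F j) (phi (i :: s) j) xstar
    = \sum_j bregman (F j) (phi s j) xstar - bregman (F i) (phi s i) xstar
      + bregman (F i) (X s) xstar.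
  rewrite (bigD1 i) //= [in RHS](bigD1 i) //= eqxx.
  rewrite (eq_bigr (fun j => bregman (F j) (phi s j) xstar)); last first.
    by move=> j /negPf ->.
  by rewrite [bregman (F i) (phi s i) xstar + _]addrC addrK addrC.
rewrite /saga_H; under eq_bigr do rewrite update.
rewrite -mulr_sumr big_split /= sumrB sumr_const card_ord.
rewrite bregman_scaled_sum => [|i]; last exact: diffF_at.
have combine (Sp Sx : R) : n%:R^-1 * (n%:R^-1 * (Sp *+ n - Sp + Sx))
    = n%:R^-1 * Sp + n%:R^-1 * (n%:R^-1 * Sx - n%:R^-1 * Sp).
  by rewrite -mulr_natl; field.
exact: combine.
Qed.

Lemma saga_contraction (m : R) s :
  eta = (8 * L)^-1 -> rel_strongly_convex mu f h ->
  m * (8 * L) <= mu -> m * (2 * n%:R) <= 1 ->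
  n%:R^-1 * \sum_i saga_psi x0 X F h eta xstar (i :: s)
    <= (1 - m) * saga_psi x0 X F h eta xstar s.
Proof.
move=> eta_def strong m_mu m_n.
have eta_ge0 : 0 <= eta by rewrite eta_def invr_ge0 mulr_ge0 // ltW.
have Dh_ge0 : 0 <= bregman h xstar (X s).
  by rewrite bregman_quad // mulr_ge0 ?invr_ge0 ?ler0n ?bil_pd_ge0.
rewrite /saga_psi big_split /= -2!mulr_sumr mulrDr.
rewrite [n%:R^-1 * (eta^-1 * _)]mulrCA [n%:R^-1 * (_ / 2 * _)]mulrCA expected_H_step.
have combine (Dh Dx Ds Hs S1 : R) : 0 <= Dh -> 0 <= Dx -> 0 <= Hs -> mu * Dh <= Ds ->
    S1 <= Dh - eta * (Dx + Ds) + 2 * L * eta ^+ 2 * (Dx + Hs) ->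
    eta^-1 * S1 + n%:R / 2 * (Hs + n%:R^-1 * (Dx - Hs))
      <= (1 - m) * (eta^-1 * Dh + n%:R / 2 * Hs).
  rewrite eta_def invrK => Dh0 Dx0 Hs0 mu_Dh S1_le.
  have L_neq0 : L != 0 by rewrite gt_eqF.
  have L8_ge0 : 0 <= 8 * L by rewrite mulr_ge0 ?ltW.
  have := ler_wpM2l L8_ge0 S1_le.
  have -> : 8 * L * (Dh - (8 * L)^-1 * (Dx + Ds) + 2 * L * (8 * L)^-1 ^+ 2 * (Dx + Hs))
            = 8 * L * Dh - (Dx + Ds) + (Dx + Hs) / 4 by field.
  have -> : n%:R / 2 * (Hs + n%:R^-1 * (Dx - Hs)) = n%:R / 2 * Hs + (Dx - Hs) / 2 by field.
  have := ler_wpM2r Dh0 m_mu; have := ler_wpM2r Hs0 m_n; lra.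
apply: combine => //.
- exact: bregman_f_ge0.
- exact: saga_H_ge0.
- exact: expected_bregman_step.
Qed.

End SagaStep.

Section Expectation.
Variables (R : realType) (n : nat).

Lemma sum_tupleS (t : nat) (Y : seq 'I_n -> R) :
  \sum_(s : t.+1.-tuple 'I_n) Y s = \sum_(s : t.-tuple 'I_n) \sum_(i < n) Y (i :: s).
Proof.
rewrite exchange_big pair_bigA /=.
rewrite (reindex (fun p : 'I_n * t.-tuple 'I_n => [tuple of p.1 :: p.2])) //=.
exists (fun s : t.+1.-tuple 'I_n => (thead s, [tuple of behead s])).
  by move=> [i s] _ /=; congr (_, _); apply: val_inj.
by move=> s _; case: s / tupleP => x u; apply: val_inj.
Qed.

Lemma expect_t0 (Y : seq 'I_n -> R) : expect_t 0 Y = Y [::].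
Proof.
rewrite /expect_t expr0 invr1 mul1r (big_pred1 [tuple]) //.
by move=> s; apply/esym/eqP/tuple0.
Qed.

Lemma expect_tS (t : nat) (Y : seq 'I_n -> R) :
  expect_t t.+1 Y = expect_t t (fun s => n%:R^-1 * \sum_(i < n) Y (i :: s)).
Proof.
rewrite /expect_t sum_tupleS -mulr_sumr exprS invfM mulrA.
by rewrite [_ * n%:R^-1]mulrC.
Qed.

Lemma ler_expect_t (t : nat) (Y Z : seq 'I_n -> R) :
  (forall s, Y s <= Z s) -> expect_t t Y <= expect_t t Z.
Proof.
move=> YZ; rewrite /expect_t ler_wpM2l ?invr_ge0 ?exprn_ge0 //.
by apply: ler_sum => s _.
Qed.

Lemma expect_tZ (t : nat) (a : R) (Y : seq 'I_n -> R) :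
  expect_t t (fun s => a * Y s) = a * expect_t t Y.
Proof. by rewrite /expect_t -mulr_sumr mulrCA. Qed.

End Expectation.

Lemma saga_rate_bounds (R : realType) (L mu N : R) : 0 < L -> 0 < mu -> 1 <= N ->
  let m := Num.min (8 * (L / mu))^-1 (2 * N)^-1 in
  [/\ m * (8 * L) <= mu, m * (2 * N) <= 1 & 0 <= 1 - m].
Proof.
move=> L_gt0 mu_gt0 N_ge1 m.
have m_gt0 : 0 < m.
  rewrite lt_min !invr_gt0; apply/andP; split; apply: mulr_gt0 => //.
  - exact: divr_gt0.
  - lra.
have m_mu : m * (8 * L) <= mu.
  have L8_ge0 : 0 <= 8 * L by rewrite mulr_ge0 ?ltW.
  have m_le : m <= (8 * (L / mu))^-1 by rewrite ge_min lexx.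
  have := ler_wpM2r L8_ge0 m_le.
  have -> // : (8 * (L / mu))^-1 * (8 * L) = mu.
  by field; rewrite !gt_eqF.
have m_N : m * (2 * N) <= 1.
  have N2_gt0 : 0 < 2 * N by lra.
  have m_le : m <= (2 * N)^-1 by rewrite ge_min lexx orbT.
  have := ler_wpM2r (ltW N2_gt0) m_le.
  by rewrite mulVf ?gt_eqF.
split => //; nra.
Qed.

Theorem corollary1 (R : realType) (d n : nat)
  (A : 'M[R]_d) (b : 'rV[R]_d) (c : R)
  (F : 'I_n -> 'rV[R]_d -> R) (L mu : R) (xstar x0 : 'rV[R]_d)
  (X : seq 'I_n -> 'rV[R]_d) :
  let h := quad A b c in
  let f := fun x => n%:R^-1 * \sum_(i < n) F i x in
  let eta := (8 * L)^-1 in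
  let kappa := L / mu in
  (0 < n)%N ->
  A^T = A ->
  (forall v : 'rV[R]_d, v != 0 -> 0 < (v *m A *m v^T) 0 0) ->
  (forall i, differentiable_everywhere (F i)) ->
  (forall i, convex_fun (F i)) ->
  (forall i, rel_smooth L (F i) h) ->
  0 < L ->
  rel_strongly_convex mu f h ->
  0 < mu ->
  (forall x, f xstar <= f x) ->
  grad f xstar = 0 ->
  is_saga_iterates x0 X F h eta ->
  gain_condition h (fun _ _ _ => 1) /\
  forall t : nat,
    expect_t t (saga_psi x0 X F h eta xstar)
      <= (1 - Num.min (8 * kappa)^-1 (2 * n%:R)^-1) ^+ t
         * saga_psi x0 X F h eta xstar [::].
Proof.
(* Minimality of xstar is used only through grad f xstar = 0. *)
move=> h f eta kappa n_gt0 symA pdA diffF convF smoothF L_gt0 strong mu_gt0 _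
  grad_f_xstar saga.
split; first exact: gain_condition_quad.
have n_ge1 : 1 <= n%:R :> R by rewrite ler1n.
have [m_mu m_n m_le1] := saga_rate_bounds L_gt0 mu_gt0 n_ge1.
elim=> [|t IH]; first by rewrite expect_t0 expr0 mul1r.
rewrite expect_tS exprS -mulrA.
apply: le_trans (ler_wpM2l m_le1 IH); rewrite -expect_tZ; apply: ler_expect_t => s.
exact: saga_contraction.
Qed.
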